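(* Let $(X,d)$ be a compact metric space and $f_{1,\infty}$ a commutative $m$-periodic sequence of continuous surjective self-maps of $X$. Then $(X,f_{1,\infty})$ is weakly mixing if and only if $(X,f_{1,\infty}^{[k]})$ is weakly mixing for every $k\ge1$.
   Context: Commutative: $f_i\circ f_j=f_j\circ f_i$ for all $i,j$. $m$-periodic: $f_{n+m}=f_n$ for all $n\ge1$. Write $f_n^i=f_{n+i-1}\circ\cdots\circ f_n$, $f_1^n=f_n\circ\cdots\circ f_1$, and $f_{1,\infty}^{[k]}=\{f_{k(n-1)+1}^k\}_{n=1}^\infty$ (whose $n$-fold composition is $f_1^{kn}$). A non-autonomous system $(Y,g_{1,\infty})$ is weakly mixing if for all non-empty open $U_1,U_2,V_1,V_2$ there is $n$ with $g_1^n(U_i)\cap V_i\ne\emptyset$, $i=1,2$. *)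

From Stdlib Require Import Reals List Arith.
Open Scope R_scope.

Definition is_metric {X : Type} (d : X -> X -> R) : Prop :=
  (forall x y, 0 <= d x y) /\
  (forall x y, d x y = 0 <-> x = y) /\
  (forall x y, d x y = d y x) /\
  (forall x y z, d x z <= d x y + d y z).

Definition is_open {X : Type} (d : X -> X -> R) (U : X -> Prop) : Prop :=
  forall x, U x -> exists eps, 0 < eps /\ forall y, d x y < eps -> U y.

Definition is_compact {X : Type} (d : X -> X -> R) : Prop :=
  forall (I : Type) (U : I -> X -> Prop),
    (forall i, is_open d (U i)) ->
    (forall x, exists i, U i x) ->
    exists l : list I, forall x, exists i, In i l /\ U i x.

Definition continuous_map {X : Type} (d : X -> X -> R) (g : X -> X) : Prop :=
  forall x eps, 0 < eps ->
    exists delta, 0 < delta /\ forall y, d x y < delta -> d (g x) (g y) < eps.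

Definition surjective_map {X : Type} (g : X -> X) : Prop :=
  forall y, exists x, g x = y.

(* Sequences f_1, f_2, ... are functions nat -> (X -> X); index 0 is unused. *)

Fixpoint comp {X : Type} (f : nat -> X -> X) (a n : nat) (x : X) : X :=
  match n with
  | O => x
  | S n' => f (a + n')%nat (comp f a n' x)
  end.

Definition commutative_seq {X : Type} (f : nat -> X -> X) : Prop :=
  forall i j x, (1 <= i)%nat -> (1 <= j)%nat -> f i (f j x) = f j (f i x).

Definition periodic_seq {X : Type} (f : nat -> X -> X) (m : nat) : Prop :=
  forall n x, (1 <= n)%nat -> f (n + m)%nat x = f n x.

Definition block_seq {X : Type} (f : nat -> X -> X) (k : nat) : nat -> X -> X :=
  fun n => comp f (k * (n - 1) + 1)%nat k.

Definition weakly_mixing {X : Type} (d : X -> X -> R) (g : nat -> X -> X) : Prop :=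
  forall U1 U2 V1 V2 : X -> Prop,
    is_open d U1 -> is_open d U2 -> is_open d V1 -> is_open d V2 ->
    (exists x, U1 x) -> (exists x, U2 x) -> (exists x, V1 x) -> (exists x, V2 x) ->
    exists n, (1 <= n)%nat /\
      (exists x, U1 x /\ V1 (comp g 1 n x)) /\
      (exists x, U2 x /\ V2 (comp g 1 n x)).

(* The key point is a Furstenberg-type refinement: if f is weakly mixing and
   commutative, then for finitely many pairs (U_s, V_s) of nonempty open sets
   there is a single pair (A, B) such that every time n carrying A into B
   carries every U_s into V_s.  To hit at a multiple of L = k m, take the pairs
   (U, f_{s+1}^{-(L - s)} V) for all residues s < L; a time n = L q + s that
   works for the pair of residue s then extends, by m-periodicity, to the time
   L (q + 1).  The converse direction is the case k = 1. *)
From Stdlib Require Import Reals Arith Lia.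

Local Open Scope nat_scope.

Section Compositions.

Variables (X : Type) (f : nat -> X -> X).

Lemma comp_add (a n p : nat) (x : X) :
  comp f a (n + p) x = comp f (a + n) p (comp f a n x).
Proof.
  induction p as [|p IH]; simpl.
  - now rewrite Nat.add_0_r.
  - rewrite Nat.add_succ_r; simpl; rewrite IH.
    now replace (a + n + p) with (a + (n + p)) by lia.
Qed.

Lemma f_comm_comp (Hcomm : commutative_seq f) (j a n : nat) (x : X) :
  1 <= j -> 1 <= a -> f j (comp f a n x) = comp f a n (f j x).
Proof.
  intros Hj Ha; induction n as [|n IH]; simpl; [reflexivity|].
  now rewrite Hcomm, IH by lia.
Qed.

Lemma comp_comm (Hcomm : commutative_seq f) (a b n p : nat) (x : X) :
  1 <= a -> 1 <= b -> comp f a n (comp f b p x) = comp f b p (comp f a n x).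
Proof.
  intros Ha Hb; induction p as [|p IH]; simpl; [reflexivity|].
  now rewrite <- f_comm_comp, IH by (auto; lia).
Qed.

Section Periodic.

Variables (m : nat) (Hper : periodic_seq f m).

Lemma f_periodic_mul (q j : nat) (x : X) : 1 <= j -> f (j + m * q) x = f j x.
Proof.
  intros Hj; induction q as [|q IH].
  - now rewrite Nat.mul_0_r, Nat.add_0_r.
  - now replace (j + m * S q) with (j + m * q + m) by lia; rewrite Hper by lia.
Qed.

Lemma comp_periodic (q a n : nat) (x : X) :
  1 <= a -> comp f (a + m * q) n x = comp f a n x.
Proof.
  intros Ha; induction n as [|n IH]; simpl; [reflexivity|].
  rewrite IH; replace (a + m * q + n) with (a + n + m * q) by lia.
  apply f_periodic_mul; lia.
Qed.

Lemma comp_shift_period (j q s : nat) (x : X) :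
  s <= m * j ->
  comp f (1 + s) (m * j - s) (comp f 1 (m * j * q + s) x)
  = comp f 1 (m * j * S q) x.
Proof.
  intros Hs.
  replace (m * j * S q) with (m * j * q + s + (m * j - s)) by nia.
  rewrite (comp_add 1 (m * j * q + s)).
  replace (1 + (m * j * q + s)) with (1 + s + m * (j * q)) by lia.
  now rewrite (comp_periodic (j * q) (1 + s)) by lia.
Qed.

End Periodic.

Lemma comp_block (k N : nat) (x : X) :
  comp (block_seq f k) 1 N x = comp f 1 (k * N) x.
Proof.
  induction N as [|N IH].
  - simpl; now rewrite Nat.mul_0_r.
  - replace (k * S N) with (k * N + k) by ring.
    rewrite comp_add, <- IH; simpl; unfold block_seq.
    f_equal; lia.
Qed.

End Compositions.

Definition nonempty_open {X : Type} (d : X -> X -> R) (A : X -> Prop) : Prop :=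
  is_open d A /\ exists x, A x.

Section Topology.

Local Open Scope R_scope.

Context {X : Type} (d : X -> X -> R).

Lemma continuous_map_comp (g h : X -> X) :
  continuous_map d g -> continuous_map d h -> continuous_map d (fun x => g (h x)).
Proof.
  intros Hg Hh x eps Heps.
  destruct (Hg (h x) eps Heps) as [e1 [He1 H1]].
  destruct (Hh x e1 He1) as [e2 [He2 H2]].
  exists e2; auto.
Qed.

Lemma continuous_comp (f : nat -> X -> X) (a n : nat) :
  (forall i, (1 <= i)%nat -> continuous_map d (f i)) -> (1 <= a)%nat ->
  continuous_map d (comp f a n).
Proof.
  intros Hcont Ha; induction n as [|n IH].
  - intros x eps Heps; exists eps; auto.
  - apply (continuous_map_comp (f (a + n)%nat)); [apply Hcont; lia | exact IH].
Qed.

Lemma surjective_comp (f : nat -> X -> X) (a n : nat) :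
  (forall i, (1 <= i)%nat -> surjective_map (f i)) -> (1 <= a)%nat ->
  surjective_map (comp f a n).
Proof.
  intros Hsurj Ha; induction n as [|n IH]; intros y.
  - now exists y.
  - destruct (Hsurj (a + n)%nat ltac:(lia) y) as [z Hz].
    destruct (IH z) as [x Hx].
    exists x; simpl; now rewrite Hx.
Qed.

Lemma open_preimage (g : X -> X) (V : X -> Prop) :
  continuous_map d g -> is_open d V -> is_open d (fun x => V (g x)).
Proof.
  intros Hg HV x Vgx.
  destruct (HV _ Vgx) as [e [He HVe]].
  destruct (Hg x e He) as [delta [Hdelta Hg']].
  exists delta; auto.
Qed.

Lemma open_and (A B : X -> Prop) :
  is_open d A -> is_open d B -> is_open d (fun x => A x /\ B x).
Proof.
  intros HA HB x [Ax Bx].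
  destruct (HA x Ax) as [e1 [He1 H1]], (HB x Bx) as [e2 [He2 H2]].
  exists (Rmin e1 e2); split; [now apply Rmin_pos|].
  intros y Hy; split.
  - apply H1, (Rlt_le_trans _ _ _ Hy), Rmin_l.
  - apply H2, (Rlt_le_trans _ _ _ Hy), Rmin_r.
Qed.

Lemma nonempty_open_preimage (g : X -> X) (V : X -> Prop) :
  continuous_map d g -> surjective_map g ->
  nonempty_open d V -> nonempty_open d (fun x => V (g x)).
Proof.
  intros Hg Hsurj [HV [y Vy]]; split.
  - now apply open_preimage.
  - destruct (Hsurj y) as [x <-]; now exists x.
Qed.

End Topology.

Definition hits {X : Type} (f : nat -> X -> X) (A B : X -> Prop) (n : nat) : Prop :=
  exists x, A x /\ B (comp f 1 n x).

Lemma weakly_mixingP {X : Type} (d : X -> X -> R) (g : nat -> X -> X) :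
  weakly_mixing d g <->
  forall U1 U2 V1 V2 : X -> Prop,
    nonempty_open d U1 -> nonempty_open d U2 ->
    nonempty_open d V1 -> nonempty_open d V2 ->
    exists n, 1 <= n /\ hits g U1 V1 n /\ hits g U2 V2 n.
Proof.
  split.
  - intros Hwm U1 U2 V1 V2 [] [] [] []; now apply Hwm.
  - intros Hwm U1 U2 V1 V2 **; now apply Hwm.
Qed.

Lemma hits_block {X : Type} (f : nat -> X -> X) (k n : nat) (A B : X -> Prop) :
  hits (block_seq f k) A B n <-> hits f A B (k * n).
Proof. split; intros [x Hx]; exists x; now rewrite comp_block in *. Qed.

Section Refinement.

Variables (X : Type) (d : X -> X -> R) (f : nat -> X -> X).
Hypotheses (Hcomm : commutative_seq f)
  (Hcont : forall n, 1 <= n -> continuous_map d (f n))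
  (Hwm : weakly_mixing d f).

(* With p a common hitting time of (A, U) and (B, V), take
   A' = A ∩ f_1^{-p} U and B' = B ∩ f_1^{-p} V; commutativity lets the
   time-p map pass through the time-n map. *)
Lemma hits_refine (A B U V : X -> Prop) :
  nonempty_open d A -> nonempty_open d B ->
  nonempty_open d U -> nonempty_open d V ->
  exists A' B', nonempty_open d A' /\ nonempty_open d B' /\
    forall n, hits f A' B' n -> hits f A B n /\ hits f U V n.
Proof.
  intros HA HB HU HV.
  destruct (proj1 (weakly_mixingP d f) Hwm A B U V HA HB HU HV)
    as [p [_ [[x [Ax Ux]] [y [By Vy]]]]].
  assert (Hp : continuous_map d (comp f 1 p)) by (apply continuous_comp; auto).
  exists (fun z => A z /\ U (comp f 1 p z)), (fun z => B z /\ V (comp f 1 p z)).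
  split; [|split].
  - split; [apply open_and; [apply HA | apply open_preimage, HU; exact Hp] | now exists x].
  - split; [apply open_and; [apply HB | apply open_preimage, HV; exact Hp] | now exists y].
  - intros n [z [[Az Uz] [Bz Vz]]]; split.
    + now exists z.
    + exists (comp f 1 p z); split; [assumption|].
      now rewrite comp_comm by auto.
Qed.

Lemma hits_refine_family (Us Vs : nat -> X -> Prop) (N : nat) :
  (forall s, s <= N -> nonempty_open d (Us s)) ->
  (forall s, s <= N -> nonempty_open d (Vs s)) ->
  exists A B, nonempty_open d A /\ nonempty_open d B /\
    forall n, hits f A B n -> forall s, s <= N -> hits f (Us s) (Vs s) n.
Proof.
  induction N as [|N IH]; intros HUs HVs.
  - exists (Us 0), (Vs 0); split; [auto|split; [auto|]].
    intros n Hn s Hs; now replace s with 0 by lia.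
  - destruct IH as [A [B [HA [HB Hhits]]]];
      [intros s Hs; apply HUs; lia | intros s Hs; apply HVs; lia |].
    destruct (hits_refine A B (Us (S N)) (Vs (S N)) HA HB) as [A' [B' [HA' [HB' Hhits']]]];
      auto.
    exists A', B'; split; [auto|split; [auto|]].
    intros n Hn s Hs; apply Hhits' in Hn as [Hn HN].
    destruct (Nat.eq_dec s (S N)) as [->|Hne]; [assumption|].
    apply Hhits; [assumption|lia].
Qed.

Section Periodic.

Variables (m : nat) (Hper : periodic_seq f m).
Hypotheses (Hm : 1 <= m) (Hsurj : forall n, 1 <= n -> surjective_map (f n)).

Lemma hits_multiple_period (j : nat) (U1 U2 V1 V2 : X -> Prop) :
  1 <= j ->
  nonempty_open d U1 -> nonempty_open d U2 ->
  nonempty_open d V1 -> nonempty_open d V2 ->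
  exists q, 1 <= q /\ hits f U1 V1 (m * j * q) /\ hits f U2 V2 (m * j * q).
Proof.
  intros Hj HU1 HU2 HV1 HV2.
  set (L := m * j).
  assert (HL : 1 <= L) by (unfold L; nia).
  set (shift (V : X -> Prop) s := fun x => V (comp f (1 + s) (L - s) x)).
  assert (Hshift : forall V s, nonempty_open d V -> nonempty_open d (shift V s)).
  { intros V s HV; apply (nonempty_open_preimage d (comp f (1 + s) (L - s))); auto.
    - apply continuous_comp; auto; lia.
    - apply surjective_comp; auto; lia. }
  destruct (hits_refine_family (fun _ => U1) (shift V1) (L - 1)) as [A1 [B1 [HA1 [HB1 H1]]]];
    auto.
  destruct (hits_refine_family (fun _ => U2) (shift V2) (L - 1)) as [A2 [B2 [HA2 [HB2 H2]]]];
    auto.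
  destruct (hits_refine A1 B1 A2 B2) as [A [B [HA [HB H12]]]]; auto.
  destruct (proj1 (weakly_mixingP d f) Hwm A A B B HA HA HB HB) as [n [_ [Hn _]]].
  destruct (H12 n Hn) as [Hn1 Hn2].
  set (s := n mod L); set (q := n / L).
  assert (Hs : s < L) by (apply Nat.mod_upper_bound; lia).
  assert (Hnqs : n = L * q + s) by (apply Nat.div_mod; lia).
  assert (Hunshift : forall U V, hits f U (shift V s) n -> hits f U V (L * S q)).
  { intros U V [x [Ux Vx]]; exists x; split; [assumption|].
    unfold shift in Vx; rewrite Hnqs in Vx; unfold L in *.
    now rewrite <- (comp_shift_period X f m Hper j q s x) by lia. }
  exists (S q); split; [lia|].
  split; apply Hunshift; [apply H1 | apply H2]; auto; lia.
Qed.

End Periodic.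

End Refinement.

Theorem mainTheorem12 (X : Type) (d : X -> X -> R) (f : nat -> X -> X) (m : nat)
  (Hd : is_metric d) (Hcpt : is_compact d)
  (Hm : (1 <= m)%nat)
  (Hcomm : commutative_seq f) (Hper : periodic_seq f m)
  (Hcont : forall n, (1 <= n)%nat -> continuous_map d (f n))
  (Hsurj : forall n, (1 <= n)%nat -> surjective_map (f n)) :
  weakly_mixing d f <-> (forall k, (1 <= k)%nat -> weakly_mixing d (block_seq f k)).
Proof.
  split.
  - intros Hwm k Hk; apply weakly_mixingP; intros U1 U2 V1 V2 HU1 HU2 HV1 HV2.
    destruct (hits_multiple_period X d f Hcomm Hcont Hwm m Hper Hm Hsurj k
                U1 U2 V1 V2 Hk HU1 HU2 HV1 HV2) as [q [Hq [H1 H2]]].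
    exists (m * q); rewrite !hits_block.
    replace (k * (m * q)) with (m * k * q) by ring.
    split; [nia|auto].
  - intros Hblock; apply weakly_mixingP; intros U1 U2 V1 V2 HU1 HU2 HV1 HV2.
    destruct (proj1 (weakly_mixingP d _) (Hblock 1 (le_n 1)) U1 U2 V1 V2 HU1 HU2 HV1 HV2)
      as [n [Hn [H1 H2]]].
    rewrite hits_block, Nat.mul_1_l in H1, H2.
    now exists n.
Qed.
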